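(* Let $\Lambda$ be a finitely aligned left cancellative small category and $v\in\Lambda^0$. (1) For $C\in v\Lambda^*$ let $H(C)=\{\alpha\in v\Lambda:\alpha\Lambda\in C\}$. Then $C\mapsto H(C)$ is a bijection from $v\Lambda^*$ onto the set of directed hereditary subsets of $v\Lambda$, with inverse $H\mapsto\{E\in\mathcal D^{(0)}_v: E\supseteq\alpha\Lambda\text{ for some }\alpha\in H\}$; moreover $C_1\subseteq C_2$ iff $H(C_1)\subseteq H(C_2)$. (2) For $C\in v\Lambda^*$, the ultrafilter $\mathcal U_C$ in $\mathcal A_v$ corresponding to $C$ equals $\{A\in\mathcal A_v: A\supseteq H(C)\cap\alpha\Lambda\text{ for some }\alpha\in H(C)\}$.
   Context: A left cancellative small category (LCSC) is a small category $\Lambda$ such that $\alpha\beta=\alpha\gamma$ implies $\beta=\gamma$. Morphisms are composed as $\alpha\beta$ when $s(\alpha)=r(\beta)$; $\Lambda^0$ is the set of objects (identity morphisms); $v\Lambda=\{\alpha:r(\alpha)=v\}$; $\alpha\Lambda=\{\alpha\beta:r(\beta)=s(\alpha)\}$. $\Lambda$ is finitely aligned if for all $\alpha,\beta$ there is finite $G$ with $\alpha\Lambda\cap\beta\Lambda=\bigcup_{\varepsilon\in G}\varepsilon\Lambda$. For $\alpha\in\Lambda$, $\tau^\alpha(\beta)=\alpha\beta$ on $s(\alpha)\Lambda$ and $\sigma^\alpha:\alpha\Lambda\to s(\alpha)\Lambda$ is its inverse. A zigzag is a tuple $\zeta=(\alpha_1,\beta_1,\dots,\alpha_n,\beta_n)$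 with $r(\alpha_i)=r(\beta_i)$ and $s(\alpha_{i+1})=s(\beta_i)$; $s(\zeta)=s(\beta_n)$, $\mathcal Zv=\{\zeta:s(\zeta)=v\}$; $\varphi_\zeta=\sigma^{\alpha_1}\circ\tau^{\beta_1}\circ\cdots\circ\sigma^{\alpha_n}\circ\tau^{\beta_n}$ (partial map) with domain $A(\zeta)$. $\mathcal D^{(0)}_v$ is the set of nonempty $A(\zeta)$, $\zeta\in\mathcal Zv$ (it contains $\alpha\Lambda$ for $\alpha\in v\Lambda$), and $\mathcal A_v$ is the ring of sets generated by $\mathcal D^{(0)}_v$. A filter in $\mathcal D^{(0)}_v$ is a nonempty $C\subseteq\mathcal D^{(0)}_v$ closed under intersection and under supersets within $\mathcal D^{(0)}_v$; a finite $\mathcal F\subseteq\mathcal D^{(0)}_v$ covers $C$ if some $E\in C$ satisfies $E\subseteq\bigcup\mathcal F$; $v\Lambda^*$ is the set of filters $C$ in $\mathcal D^{(0)}_v$ such that every finite $\mathcal F\subseteq\mathcal D^{(0)}_v$ with $\mathcal F\cap C=\varnothing$ does not cover $C$. For $C\in v\Lambda^*$, $\mathcal U_C$ denotes the unique ultrafilter $\mathcal U$ of the ring $\mathcal A_v$ with $\mathcal U\cap\mathcal D^{(0)}_v=C$ (it is generated by the sets $E\setminus\bigcup\mathcal F$ with $E\in C$ and $\mathcal F$ finite not covering $C$). A nonempty $H\subseteq\Lambda$ is directed if $H\cap\alpha\Lambda\cap\beta\Lambda\ne\varnothing$ for all $\alpha,\beta\in H$, and hereditary if $\gamma\in H$ whenever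 $\alpha\in H$ and $\alpha\in\gamma\Lambda$. *)

From Stdlib Require Import List.
Import ListNotations.
Set Implicit Arguments.

(** Small category, objects as a separate type; [dom] = source s, [cod] = range r.
    Composition [comp a b] = a b is meaningful when [dom a = cod b]. *)
Record LCSC := {
  Obj : Type;
  Mor : Type;
  idm : Obj -> Mor;
  dom : Mor -> Obj;
  cod : Mor -> Obj;
  comp : Mor -> Mor -> Mor;
  idm_dom : forall v, dom (idm v) = v;
  idm_cod : forall v, cod (idm v) = v;
  comp_dom : forall a b, dom a = cod b -> dom (comp a b) = dom b;
  comp_cod : forall a b, dom a = cod b -> cod (comp a b) = cod a;
  comp_assoc : forall a b c, dom a = cod b -> dom b = cod c ->
      comp (comp a b) c = comp a (comp b c);
  comp_id_l : forall a, comp (idm (cod a)) a = a;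
  comp_id_r : forall a, comp a (idm (dom a)) = a;
  left_cancel : forall a b c, dom a = cod b -> dom a = cod c ->
      comp a b = comp a c -> b = c
}.

Arguments idm {_}.
Arguments dom {_}.
Arguments cod {_}.
Arguments comp {_}.

Section Defs.
Context {L : LCSC}.

Definition mset := Mor L -> Prop.
Definition msetI (A B : mset) : mset := fun x => A x /\ B x.
Definition msetU (A B : mset) : mset := fun x => A x \/ B x.
Definition msetD (A B : mset) : mset := fun x => A x /\ ~ B x.
Definition mset0 : mset := fun _ => False.
Definition msubset (A B : mset) : Prop := forall x, A x -> B x.
Definition bigU (F : list mset) : mset := fun x => exists E, In E F /\ E x.

Definition vL (v : Obj L) : mset := fun a => cod a = v.
Definition aL (a : Mor L) : mset :=
  fun g => exists b, cod b = dom a /\ g = comp a b.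

Definition finitely_aligned : Prop :=
  forall a b : Mor L, exists G : list (Mor L),
    forall g, (aL a g /\ aL b g) <-> exists e, In e G /\ aL e g.

(** Zigzags: lists [(α_1,β_1); ...; (α_n,β_n)]. *)
Fixpoint zz_ok (z : list (Mor L * Mor L)) : Prop :=
  match z with
  | [] => True
  | (a, b) :: z' =>
      cod a = cod b /\
      match z' with [] => True | (a', _) :: _ => dom a' = dom b end /\
      zz_ok z'
  end.

(** ζ is a zigzag with s(ζ) = v (in particular nonempty). *)
Definition zigzag_at (v : Obj L) (z : list (Mor L * Mor L)) : Prop :=
  zz_ok z /\ exists z0 a b, z = z0 ++ [(a, b)] /\ dom b = v.

(** σ^a ∘ τ^b as a relation: g ↦ d iff b g = a d. *)
Definition step (p : Mor L * Mor L) (g d : Mor L) : Prop :=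
  cod g = dom (snd p) /\ cod d = dom (fst p) /\ comp (fst p) d = comp (snd p) g.

(** φ_ζ = σ^{α_1} τ^{β_1} ⋯ σ^{α_n} τ^{β_n} as a (partial functional) relation. *)
Fixpoint phi_rel (z : list (Mor L * Mor L)) (g d : Mor L) : Prop :=
  match z with
  | [] => g = d
  | p :: z' => exists m, phi_rel z' g m /\ step p m d
  end.

Definition Adom (z : list (Mor L * Mor L)) : mset := fun g => exists d, phi_rel z g d.

Definition D0 (v : Obj L) (E : mset) : Prop :=
  (exists x, E x) /\ exists z, zigzag_at v z /\ E = Adom z.

Inductive ring_gen (v : Obj L) : mset -> Prop :=
  | rg_base : forall E, D0 v E -> ring_gen v E
  | rg_empty : ring_gen v mset0
  | rg_union : forall A B, ring_gen v A -> ring_gen v B -> ring_gen v (msetU A B)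
  | rg_diff : forall A B, ring_gen v A -> ring_gen v B -> ring_gen v (msetD A B).

Definition D0_filter (v : Obj L) (C : mset -> Prop) : Prop :=
  (exists E, C E) /\
  (forall E, C E -> D0 v E) /\
  (forall E F, C E -> C F -> C (msetI E F)) /\
  (forall E F, C E -> D0 v F -> msubset E F -> C F).

Definition covers (F : list mset) (C : mset -> Prop) : Prop :=
  exists E, C E /\ msubset E (bigU F).

Definition vLstar (v : Obj L) (C : mset -> Prop) : Prop :=
  D0_filter v C /\
  forall F : list mset, (forall E, In E F -> D0 v E) ->
    (forall E, In E F -> ~ C E) -> ~ covers F C.

Definition Hof (v : Obj L) (C : mset -> Prop) : mset :=
  fun a => vL v a /\ C (aL a).

Definition Cof (v : Obj L) (H : mset) : mset -> Prop :=
  fun E => D0 v E /\ exists a, H a /\ msubset (aL a) E.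

Definition directed (H : mset) : Prop :=
  (exists a, H a) /\
  forall a b, H a -> H b -> exists g, H g /\ aL a g /\ aL b g.

Definition hereditary (H : mset) : Prop :=
  forall a g, H a -> aL g a -> H g.

Definition ring_filter (v : Obj L) (U : mset -> Prop) : Prop :=
  (exists A, U A) /\
  (forall A, U A -> ring_gen v A) /\
  ~ U mset0 /\
  (forall A B, U A -> U B -> U (msetI A B)) /\
  (forall A B, U A -> ring_gen v B -> msubset A B -> U B).

Definition ring_ultrafilter (v : Obj L) (U : mset -> Prop) : Prop :=
  ring_filter v U /\
  forall U', ring_filter v U' -> (forall A, U A -> U' A) -> forall A, U' A -> U A.

Definition UofC (v : Obj L) (C : mset -> Prop) : mset -> Prop :=
  fun A => ring_gen v A /\
    exists a, Hof v C a /\ msubset (msetI (Hof v C) (aL a)) A.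

End Defs.

From Stdlib Require Import List Classical FunctionalExtensionality PropExtensionality.
Import ListNotations.

(* Finite alignment makes the preimage of a principal right ideal under each step
   σ^α τ^β a finite union of principal right ideals, so every E ∈ 𝒟^{(0)}_v is a finite
   union of sets eΛ ⊆ E.  A filter C ∈ vΛ^* containing E cannot have all these eΛ
   outside C (they would cover C), so some eΛ ⊆ E lies in C: C is generated by the
   principal ideals it contains, i.e. by H(C), which is directed and hereditary.
   Conversely the principal ideals of a directed hereditary H generate such a filter,
   using that 𝒟^{(0)}_v is closed under nonempty intersections.

   For (2), directedness of H = H(C) makes the sets H ∩ αΛ (α ∈ H) a filter base.
   Every member of the ring 𝒜_v eventually lies inside or outside it along this base,
   so "eventually inside" and membership in an ultrafilter U agreeing with C on
   𝒟^{(0)}_v are both compatible with unions and differences; by induction on 𝒜_v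
   they coincide, and U = 𝒰_C. *)

Section Development.
Context {L : LCSC}.

Lemma mset_ext (A B : @mset L) : (forall x, A x <-> B x) -> A = B.
Proof.
  intros HAB; apply functional_extensionality; intros x.
  apply propositional_extensionality; auto.
Qed.

Lemma mset_family_ext (P Q : @mset L -> Prop) : (forall E, P E <-> Q E) -> P = Q.
Proof.
  intros HPQ; apply functional_extensionality; intros E.
  apply propositional_extensionality; auto.
Qed.

Lemma aL_refl (a : Mor L) : aL a a.
Proof. exists (idm (dom a)); split; [apply idm_cod | symmetry; apply comp_id_r]. Qed.

Lemma aL_cod (a g : Mor L) : aL a g -> cod g = cod a.
Proof. intros [b [Hb ->]]; apply comp_cod; congruence. Qed.

Lemma aL_trans (a b g : Mor L) : aL a b -> aL b g -> aL a g.
Proof.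
  intros [c [Hc ->]] [d [Hd ->]].
  rewrite comp_dom in Hd by congruence.
  exists (comp c d); split.
  - rewrite comp_cod; congruence.
  - rewrite comp_assoc; congruence.
Qed.

Lemma aL_idm (w : Obj L) (g : Mor L) : cod g = w -> aL (idm w) g.
Proof. intros <-; exists g; split; [rewrite idm_dom | symmetry; apply comp_id_l]; reflexivity. Qed.

Lemma aL_comp_cancel (b e m : Mor L) : cod e = dom b -> cod m = dom b ->
  aL (comp b e) (comp b m) <-> aL e m.
Proof.
  intros He Hm; split.
  - intros [c [Hc Heq]].
    rewrite comp_dom in Hc by congruence.
    rewrite comp_assoc in Heq by congruence.
    exists c; split; [exact Hc |].
    apply left_cancel in Heq; [exact Heq | congruence | rewrite comp_cod; congruence].
  - intros [c [Hc ->]]; exists c; split.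
    + rewrite comp_dom; congruence.
    + rewrite comp_assoc; congruence.
Qed.

(** * Zigzag maps *)

Lemma phi_rel_app (z1 z2 : list (Mor L * Mor L)) (g d : Mor L) :
  phi_rel (z1 ++ z2) g d <-> exists m, phi_rel z2 g m /\ phi_rel z1 m d.
Proof.
  revert d; induction z1 as [|p z1 IH]; intros d; simpl.
  - split; [intros Hd; exists d; auto | intros [m [Hm <-]]; exact Hm].
  - split.
    + intros [m [Hm Hs]]. apply IH in Hm as [m' [Hm' Hm]].
      exists m'; split; [exact Hm' | exists m; auto].
    + intros [m [Hm [m' [Hm' Hs]]]].
      exists m'; split; [apply IH; exists m; auto | exact Hs].
Qed.

Lemma step_dom (p : Mor L * Mor L) (g d : Mor L) : step p g d -> dom d = dom g.
Proof.
  destruct p as [a b]; intros [Hg [Hd Heq]]; simpl in *.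
  rewrite <- (comp_dom _ a d), Heq by congruence.
  apply comp_dom; congruence.
Qed.

Lemma step_comp_r (p : Mor L * Mor L) (g d h : Mor L) :
  step p g d -> cod h = dom g -> step p (comp g h) (comp d h).
Proof.
  intros Hs Hh. pose proof (step_dom _ _ _ Hs) as Hdg.
  destruct p as [a b]; destruct Hs as [Hg [Hd Heq]]; simpl in *.
  split; [| split]; simpl.
  - rewrite comp_cod; congruence.
  - rewrite comp_cod; congruence.
  - rewrite <- !comp_assoc by congruence; congruence.
Qed.

Lemma step_inj (p : Mor L * Mor L) (g g' d : Mor L) : step p g d -> step p g' d -> g = g'.
Proof.
  destruct p as [a b]; intros [Hg [_ Heq]] [Hg' [_ Heq']]; simpl in *.
  apply (left_cancel _ b); congruence.
Qed.

Lemma step_swap (a b g d : Mor L) : step (b, a) d g <-> step (a, b) g d.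
Proof. unfold step; simpl; intuition. Qed.

Lemma phi_rel_dom (z : list (Mor L * Mor L)) (g d : Mor L) : phi_rel z g d -> dom d = dom g.
Proof.
  revert d; induction z as [|p z IH]; simpl; intros d.
  - intros ->; reflexivity.
  - intros [m [Hm Hs]]; rewrite (step_dom _ _ _ Hs); auto.
Qed.

Lemma phi_rel_comp_r (z : list (Mor L * Mor L)) (g d h : Mor L) :
  phi_rel z g d -> cod h = dom g -> phi_rel z (comp g h) (comp d h).
Proof.
  revert d; induction z as [|p z IH]; simpl; intros d.
  - intros ->; reflexivity.
  - intros [m [Hm Hs]] Hh. exists (comp m h); split; [auto |].
    apply step_comp_r; [exact Hs |]. rewrite (phi_rel_dom _ _ _ Hm); exact Hh.
Qed.

Lemma phi_rel_inj (z : list (Mor L * Mor L)) (g g' d : Mor L) :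
  phi_rel z g d -> phi_rel z g' d -> g = g'.
Proof.
  revert d; induction z as [|p z IH]; simpl; intros d.
  - congruence.
  - intros [m [Hm Hs]] [m' [Hm' Hs']].
    rewrite <- (step_inj _ _ _ _ Hs Hs') in Hm'. eauto.
Qed.

Definition zz_rev (z : list (Mor L * Mor L)) : list (Mor L * Mor L) :=
  rev (map (fun p => (snd p, fst p)) z).

Lemma zz_rev_cons (a b : Mor L) z : zz_rev ((a, b) :: z) = zz_rev z ++ [(b, a)].
Proof. reflexivity. Qed.

Lemma zz_rev_snoc (a b : Mor L) z : zz_rev (z ++ [(a, b)]) = (b, a) :: zz_rev z.
Proof. unfold zz_rev; rewrite map_app, rev_app_distr; reflexivity. Qed.

Lemma phi_rel_rev (z : list (Mor L * Mor L)) (g d : Mor L) :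
  phi_rel (zz_rev z) d g <-> phi_rel z g d.
Proof.
  revert d; induction z as [|[a b] z IH]; intros d.
  - simpl; split; intros; symmetry; assumption.
  - rewrite zz_rev_cons, phi_rel_app; simpl; split.
    + intros [m [[m' [<- Hs]] Hm]].
      exists m; split; [apply IH; exact Hm | apply step_swap; exact Hs].
    + intros [m [Hm Hs]].
      exists m; split; [exists d; split; [reflexivity | apply step_swap; exact Hs] |].
      apply IH; exact Hm.
Qed.

(* φ_{ζ₂}⁻¹ ∘ φ_{ζ₂} is the identity on A(ζ₂), so it only restricts the domain
   of φ_{ζ₁}. *)
Lemma Adom_meet (z1 z2 : list (Mor L * Mor L)) (g : Mor L) :
  Adom (z1 ++ zz_rev z2 ++ z2) g <-> Adom z1 g /\ Adom z2 g.
Proof.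
  unfold Adom; split.
  - intros [d Hd]. apply phi_rel_app in Hd as [m [Hm Hd]].
    apply phi_rel_app in Hm as [m' [Hm' Hm]]. apply (phi_rel_rev z2) in Hm.
    rewrite (phi_rel_inj _ _ _ _ Hm Hm') in Hd. eauto.
  - intros [[d Hd] [m Hm]]. exists d.
    apply phi_rel_app; exists g; split; [| exact Hd].
    apply phi_rel_app; exists m; split; [exact Hm | apply phi_rel_rev; exact Hm].
Qed.

Definition zz_link (b : Mor L) (z : list (Mor L * Mor L)) : Prop :=
  match z with [] => True | (a', _) :: _ => dom a' = dom b end.

Lemma zz_ok_app (z1 z2 : list (Mor L * Mor L)) : zz_ok z1 -> zz_ok z2 ->
  (forall z0 a b, z1 = z0 ++ [(a, b)] -> zz_link b z2) -> zz_ok (z1 ++ z2).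
Proof.
  induction z1 as [|[a b] z1 IH]; intros H1 H2 Hlink; simpl; [exact H2 |].
  destruct H1 as [Hab [Hhead Hz1]]. split; [exact Hab | split].
  - destruct z1 as [|[a' b'] z1]; [exact (Hlink [] a b eq_refl) | exact Hhead].
  - apply IH; [exact Hz1 | exact H2 |].
    intros z0 a' b' E. apply (Hlink ((a, b) :: z0) a' b'). rewrite E; reflexivity.
Qed.

Lemma zz_ok_rev (z : list (Mor L * Mor L)) : zz_ok z -> zz_ok (zz_rev z).
Proof.
  induction z as [|[a b] z IH]; intros Hz; simpl; [exact I |].
  destruct Hz as [Hab [Hhead Hz]]. rewrite zz_rev_cons.
  apply zz_ok_app; [apply IH, Hz | simpl; auto |].
  intros z0 a' b' E. destruct z as [|[a'' b''] z].
  - destruct z0; discriminate.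
  - rewrite zz_rev_cons in E. apply app_inj_tail in E as [_ E].
    injection E as -> ->. symmetry; exact Hhead.
Qed.

Lemma zigzag_at_meet (v : Obj L) (z1 z2 : list (Mor L * Mor L)) :
  zigzag_at v z1 -> zigzag_at v z2 -> zigzag_at v (z1 ++ zz_rev z2 ++ z2).
Proof.
  intros [Hz1 [z10 [a1 [b1 [E1 Hb1]]]]] [Hz2 [z20 [a2 [b2 [E2 Hb2]]]]]. split.
  - apply zz_ok_app; [exact Hz1 | apply zz_ok_app; [apply zz_ok_rev; exact Hz2 | exact Hz2 |] |].
    + intros z0 a b E. destruct z2 as [|[a' b'] z2]; [destruct z20; discriminate |].
      rewrite zz_rev_cons in E. apply app_inj_tail in E as [_ E].
      injection E as -> ->. reflexivity.
    + intros z0 a b E. rewrite E1 in E. apply app_inj_tail in E as [_ E].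
      injection E as -> ->. rewrite E2, zz_rev_snoc; simpl; congruence.
  - exists (z1 ++ zz_rev z2 ++ z20), a2, b2. split; [| exact Hb2].
    rewrite E2 at 2; rewrite !app_assoc; reflexivity.
Qed.

Lemma Adom_vL (v : Obj L) z (g : Mor L) : zigzag_at v z -> Adom z g -> vL v g.
Proof.
  intros [_ [z0 [a [b [-> Hb]]]]] [d Hd].
  apply phi_rel_app in Hd as [m [[m' [<- [Hg _]]] _]].
  unfold vL; simpl in Hg; congruence.
Qed.

Lemma D0_vL (v : Obj L) (E : @mset L) (g : Mor L) : D0 v E -> E g -> vL v g.
Proof. intros [_ [z [Hz ->]]]; apply Adom_vL, Hz. Qed.

Lemma D0_aL_sub (v : Obj L) (E : @mset L) (g : Mor L) : D0 v E -> E g -> msubset (aL g) E.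
Proof.
  intros [_ [z [_ ->]]] [d Hd] x [h [Hh ->]].
  exists (comp d h); apply phi_rel_comp_r; assumption.
Qed.

(* αΛ = A(α, v): here σ^α τ^{v} is just σ^α. *)
Lemma D0_aL (v : Obj L) (a : Mor L) : cod a = v -> D0 v (aL a).
Proof.
  intros Ha. split; [exists a; apply aL_refl |].
  exists [(a, idm v)]. split.
  - split; [simpl; rewrite idm_cod; auto |].
    exists [], a, (idm v); split; [reflexivity | apply idm_dom].
  - apply mset_ext; intros g; unfold Adom; simpl. split.
    + intros [b [Hb ->]]. exists b, (comp a b).
      assert (Hab : cod (comp a b) = v) by (rewrite comp_cod; congruence).
      repeat split; simpl; [rewrite idm_dom; exact Hab | exact Hb |].
      rewrite <- Hab, comp_id_l; reflexivity.
    + intros [d [m [<- [Hm [Hd Heq]]]]]. simpl in *. rewrite idm_dom in Hm.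
      exists d; split; [exact Hd |]. rewrite Heq, <- Hm, comp_id_l; reflexivity.
Qed.

Lemma D0_meet (v : Obj L) (E F : @mset L) (x : Mor L) :
  D0 v E -> D0 v F -> E x -> F x -> D0 v (msetI E F).
Proof.
  intros [_ [z1 [Hz1 ->]]] [_ [z2 [Hz2 ->]]] Ex Fx.
  split; [exists x; split; assumption |].
  exists (z1 ++ zz_rev z2 ++ z2); split; [apply zigzag_at_meet; assumption |].
  apply mset_ext; intros g; rewrite Adom_meet; reflexivity.
Qed.

(** * Finite unions of principal ideals *)

Definition ideal_union (G : list (Mor L)) : @mset L :=
  fun g => exists e, In e G /\ aL e g.

Definition finite_ideal_union (X : @mset L) : Prop := exists G, X = ideal_union G.

Definition preim (R : Mor L -> Mor L -> Prop) (X : @mset L) : @mset L :=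
  fun g => exists d, R g d /\ X d.

Lemma ideal_union_nil : ideal_union [] = mset0.
Proof. apply mset_ext; intros g; split; [intros [e [[] _]] | intros []]. Qed.

Lemma ideal_union_cons (e : Mor L) G : ideal_union (e :: G) = msetU (aL e) (ideal_union G).
Proof.
  apply mset_ext; intros g; unfold msetU; split.
  - intros [f [[<- | Hf] Hg]]; [left | right; exists f]; auto.
  - intros [Hg | [f [Hf Hg]]]; [exists e | exists f]; simpl; auto.
Qed.

Lemma ideal_union_app G1 G2 :
  ideal_union (G1 ++ G2) = msetU (ideal_union G1) (ideal_union G2).
Proof.
  apply mset_ext; intros g; unfold msetU; split.
  - intros [e [He Hg]]; apply in_app_or in He as [He | He]; [left | right]; exists e; auto.
  - intros [[e [He Hg]] | [e [He Hg]]]; exists e; split; auto; apply in_or_app; auto.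
Qed.

Lemma preim_mset0 R : preim R mset0 = mset0.
Proof. apply mset_ext; intros g; split; [intros [d [_ []]] | intros []]. Qed.

Lemma preim_msetU R (X Y : @mset L) : preim R (msetU X Y) = msetU (preim R X) (preim R Y).
Proof.
  apply mset_ext; intros g; unfold preim, msetU; split.
  - intros [d [Hd [Xd | Yd]]]; [left | right]; exists d; auto.
  - intros [[d [Hd Xd]] | [d [Hd Yd]]]; exists d; auto.
Qed.

Lemma preim_phi_rel_cons p z (X : @mset L) :
  preim (phi_rel (p :: z)) X = preim (phi_rel z) (preim (step p) X).
Proof.
  apply mset_ext; intros g; unfold preim; simpl; split.
  - intros [d [[m [Hm Hs]] Hd]]; exists m; split; [exact Hm | exists d; auto].
  - intros [m [Hm [d [Hs Hd]]]]; exists d; split; [exists m; auto | exact Hd].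
Qed.

(* σ^b maps a finite union of principal ideals contained in bΛ to a finite union. *)
Lemma ideal_union_sigma (b : Mor L) G0 : (forall e, In e G0 -> aL b e) ->
  exists G, forall m, ideal_union G m <-> cod m = dom b /\ ideal_union G0 (comp b m).
Proof.
  induction G0 as [|e G0 IH]; intros HG0.
  - exists []; intros m; rewrite ideal_union_nil; split; [intros [] | intros [_ []]].
  - destruct (HG0 e (or_introl eq_refl)) as [e' [He' ->]].
    destruct IH as [G HG]; [intros f Hf; apply HG0; right; exact Hf |].
    exists (e' :: G); intros m. rewrite !ideal_union_cons; unfold msetU. rewrite HG. split.
    + intros [Hm | [Hmb Hu]]; [| auto].
      assert (Hmb : cod m = dom b) by (rewrite (aL_cod _ _ Hm); exact He').
      split; [exact Hmb | left; apply aL_comp_cancel; assumption].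
    + intros [Hmb [Hu | Hu]]; [left; apply (aL_comp_cancel b); assumption | right; auto].
Qed.

Lemma step_preim_aL (FA : @finitely_aligned L) p (k : Mor L) :
  finite_ideal_union (preim (step p) (aL k)).
Proof.
  destruct p as [a b]. destruct (classic (cod k = dom a)) as [Hk | Hk].
  - destruct (FA (comp a k) b) as [G0 HG0].
    destruct (ideal_union_sigma b G0) as [G HG].
    { intros e He. apply (HG0 e). exists e; split; [exact He | apply aL_refl]. }
    assert (Hmeet : forall m, cod m = dom b ->
              ideal_union G0 (comp b m) <-> aL (comp a k) (comp b m)).
    { intros m Hm; split.
      - intros Hu; apply HG0 in Hu; tauto.
      - intros Hu; apply HG0; split; [exact Hu | exists m; auto]. }
    exists G. apply mset_ext; intros m. rewrite HG. unfold preim, step; simpl. split.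
    + intros [d [[Hm [Hd Heq]] [c [Hc ->]]]]. split; [exact Hm |].
      apply Hmeet; [exact Hm |]. exists c; split.
      * rewrite comp_dom; congruence.
      * rewrite <- Heq, comp_assoc; congruence.
    + intros [Hm Hu]. apply Hmeet in Hu as [c [Hc Heq]]; [| exact Hm].
      rewrite comp_dom in Hc by congruence.
      exists (comp k c); split; [| exists c; auto].
      split; [exact Hm | split; [rewrite comp_cod; congruence |]].
      rewrite Heq, comp_assoc by congruence; reflexivity.
  - exists []. rewrite ideal_union_nil. apply mset_ext; intros m; split; [| intros []].
    intros [d [[_ [Hd _]] Hkd]]. simpl in Hd.
    apply Hk; rewrite <- (aL_cod _ _ Hkd); exact Hd.
Qed.

Lemma preim_ideal_union (R : Mor L -> Mor L -> Prop) :
  (forall k, finite_ideal_union (preim R (aL k))) ->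
  forall K, finite_ideal_union (preim R (ideal_union K)).
Proof.
  intros HR K; induction K as [|k K [G HG]].
  - exists []; rewrite ideal_union_nil; apply preim_mset0.
  - destruct (HR k) as [Gk HGk]. exists (Gk ++ G).
    rewrite ideal_union_cons, preim_msetU, HGk, HG, ideal_union_app; reflexivity.
Qed.

Lemma preim_phi_rel_ideal_union (FA : @finitely_aligned L) z K :
  finite_ideal_union (preim (phi_rel z) (ideal_union K)).
Proof.
  revert K; induction z as [|p z IH]; intros K.
  - exists K. apply mset_ext; intros g; unfold preim; simpl.
    split; [intros [d [<- Hd]]; exact Hd | intros Hg; exists g; auto].
  - destruct (preim_ideal_union _ (step_preim_aL FA p) K) as [G HG].
    rewrite preim_phi_rel_cons, HG; apply IH.
Qed.

Lemma D0_finite_ideal_union (FA : @finitely_aligned L) (v : Obj L) (E : @mset L) :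
  D0 v E -> finite_ideal_union E.
Proof.
  intros [_ [z [Hz ->]]].
  destruct z as [|[a b] z]; [destruct Hz as [_ [[|? ?] [? [? [Ez _]]]]]; discriminate |].
  replace (Adom ((a, b) :: z)) with (preim (phi_rel ((a, b) :: z)) (ideal_union [idm (dom a)])).
  { apply preim_phi_rel_ideal_union, FA. }
  apply mset_ext; intros g; unfold preim, Adom; split.
  - intros [d [Hd _]]; eauto.
  - intros [d Hd]; exists d; split; [exact Hd |].
    exists (idm (dom a)); split; [left; reflexivity |].
    apply aL_idm; destruct Hd as [m [_ [_ [Hd _]]]]; exact Hd.
Qed.

Lemma vLstar_D0 (v : Obj L) (C : @mset L -> Prop) (E : @mset L) :
  vLstar v C -> C E -> D0 v E.
Proof. intros [[_ [HD0 _]] _]; apply HD0. Qed.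

Lemma vLstar_up (v : Obj L) (C : @mset L -> Prop) (E F : @mset L) :
  vLstar v C -> C E -> D0 v F -> msubset E F -> C F.
Proof. intros [[_ [_ [_ Hup]]] _]; apply Hup. Qed.

Lemma vLstar_principal (FA : @finitely_aligned L) (v : Obj L) (C : @mset L -> Prop)
  (E : @mset L) : vLstar v C -> C E -> exists a, Hof v C a /\ msubset (aL a) E.
Proof.
  intros HC HCE. pose proof (vLstar_D0 _ _ _ HC HCE) as HE.
  destruct (D0_finite_ideal_union FA v E HE) as [G HG].
  apply NNPP; intros Hnone.
  assert (HGE : forall e, In e G -> msubset (aL e) E)
    by (intros e He x Hx; rewrite HG; exists e; auto).
  assert (HGv : forall e, In e G -> cod e = v)
    by (intros e He; apply (D0_vL v E e HE), (HGE e He), aL_refl).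
  apply (proj2 HC (map aL G)).
  - intros F HF. apply in_map_iff in HF as [e [<- He]]. apply D0_aL, HGv, He.
  - intros F HF HCF. apply in_map_iff in HF as [e [<- He]].
    apply Hnone; exists e; split; [split; [apply HGv, He | exact HCF] | apply HGE, He].
  - exists E; split; [exact HCE |]. intros x Hx. rewrite HG in Hx.
    destruct Hx as [e [He Hex]]. exists (aL e); split; [apply in_map, He | exact Hex].
Qed.

Lemma Hof_meet_D0 (v : Obj L) (C : @mset L -> Prop) (E : @mset L) (x : Mor L) :
  vLstar v C -> D0 v E -> Hof v C x -> E x -> C E.
Proof.
  intros HC HE [_ HCx] Ex. apply (vLstar_up v C (aL x)); [exact HC | exact HCx | exact HE |].
  exact (D0_aL_sub v E x HE Ex).
Qed.

Lemma Hof_directed (FA : @finitely_aligned L) (v : Obj L) (C : @mset L -> Prop) :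
  vLstar v C -> directed (Hof v C).
Proof.
  intros HC. pose proof HC as [[[E0 HE0] [_ [Hmeet _]]] _]. split.
  - destruct (vLstar_principal FA v C E0 HC HE0) as [a [Ha _]]; eauto.
  - intros a b [_ Ha] [_ Hb].
    destruct (vLstar_principal FA v C _ HC (Hmeet _ _ Ha Hb)) as [g [Hg Hsub]].
    exists g; split; [exact Hg | exact (Hsub g (aL_refl g))].
Qed.

Lemma Hof_hereditary (v : Obj L) (C : @mset L -> Prop) : vLstar v C -> hereditary (Hof v C).
Proof.
  intros HC a g [Ha HCa] Hga.
  assert (Hg : vL v g) by (unfold vL in *; rewrite <- (aL_cod _ _ Hga); exact Ha).
  split; [exact Hg |].
  apply (vLstar_up v C (aL a)); [exact HC | exact HCa | apply D0_aL, Hg |].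
  intros x Hx; exact (aL_trans _ _ _ Hga Hx).
Qed.

Lemma Cof_Hof (FA : @finitely_aligned L) (v : Obj L) (C : @mset L -> Prop) :
  vLstar v C -> Cof v (Hof v C) = C.
Proof.
  intros HC. apply mset_family_ext; intros E; split.
  - intros [HE [a [[_ Ha] Hsub]]]. exact (vLstar_up v C _ _ HC Ha HE Hsub).
  - intros HCE. split; [exact (vLstar_D0 v C E HC HCE) | exact (vLstar_principal FA v C E HC HCE)].
Qed.

Lemma Cof_vLstar (v : Obj L) (H : @mset L) :
  msubset H (vL v) -> directed H -> vLstar v (Cof v H).
Proof.
  intros Hv [[a0 Ha0] Hdir]. split; [split; [| split; [| split]] |].
  - exists (aL a0); split; [apply D0_aL, Hv, Ha0 |].
    exists a0; split; [exact Ha0 | intros x Hx; exact Hx].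
  - intros E [HE _]; exact HE.
  - intros E F [HE [a [Ha Hsa]]] [HF [b [Hb Hsb]]].
    destruct (Hdir a b Ha Hb) as [g [Hg [Hga Hgb]]]. split.
    + apply (D0_meet v E F g); [exact HE | exact HF | apply Hsa, Hga | apply Hsb, Hgb].
    + exists g; split; [exact Hg |]. intros x Hx.
      split; [apply Hsa | apply Hsb]; eapply aL_trans; eauto.
  - intros E F [_ [a [Ha Hsa]]] HF Hsub. split; [exact HF |].
    exists a; split; [exact Ha | intros x Hx; apply Hsub, Hsa, Hx].
  - intros F HF Hout [E [[HE [a [Ha Hsa]]] Hcov]].
    destruct (Hcov a (Hsa a (aL_refl a))) as [E' [HE' HE'a]].
    apply (Hout E' HE'). split; [exact (HF E' HE') |].
    exists a; split; [exact Ha | exact (D0_aL_sub v E' a (HF E' HE') HE'a)].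
Qed.

Lemma Hof_Cof (v : Obj L) (H : @mset L) :
  msubset H (vL v) -> hereditary H -> Hof v (Cof v H) = H.
Proof.
  intros Hv Hher. apply mset_ext; intros a; split.
  - intros [_ [_ [b [Hb Hsub]]]]. exact (Hher b a Hb (Hsub b (aL_refl b))).
  - intros Ha. split; [exact (Hv a Ha) |]. split; [apply D0_aL, Hv, Ha |].
    exists a; split; [exact Ha | intros x Hx; exact Hx].
Qed.

Lemma vLstar_incl_iff (FA : @finitely_aligned L) (v : Obj L) (C1 C2 : @mset L -> Prop) :
  vLstar v C1 -> vLstar v C2 ->
  (forall E, C1 E -> C2 E) <-> msubset (Hof v C1) (Hof v C2).
Proof.
  intros H1 H2; split.
  - intros Hsub a [Ha HCa]; exact (conj Ha (Hsub _ HCa)).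
  - intros Hsub E HE.
    rewrite <- (Cof_Hof FA v C2 H2). rewrite <- (Cof_Hof FA v C1 H1) in HE.
    destruct HE as [HE [a [Ha Hsa]]].
    split; [exact HE | exists a; split; [apply Hsub, Ha | exact Hsa]].
Qed.

(** * The filter base H ∩ αΛ of a directed set *)

(* [UofC v C A] unfolds to [ring_gen v A /\ eventually (Hof v C) A]. *)
Definition eventually (H P : @mset L) : Prop := exists b, H b /\ msubset (msetI H (aL b)) P.

Definition decided (H P : @mset L) : Prop := eventually H P \/ eventually H (fun x => ~ P x).

Lemma eventually_mono (H P Q : @mset L) : msubset P Q -> eventually H P -> eventually H Q.
Proof.
  intros HPQ [b [Hb Hsub]]; exists b; split; [exact Hb | intros x Hx; apply HPQ, Hsub, Hx].
Qed.

Lemma eventually_witness (H P : @mset L) : eventually H P -> exists x, P x.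
Proof. intros [b [Hb Hsub]]; exists b; apply Hsub; split; [exact Hb | apply aL_refl]. Qed.

Section DirectedFilterBase.
Variable H : @mset L.
Hypothesis Hdir : directed H.

Lemma eventually_of_forall (P : @mset L) : (forall x, H x -> P x) -> eventually H P.
Proof.
  intros HP. destruct (proj1 Hdir) as [a Ha].
  exists a; split; [exact Ha | intros x [Hx _]; exact (HP x Hx)].
Qed.

Lemma eventually_and (P Q : @mset L) :
  eventually H P -> eventually H Q -> eventually H (msetI P Q).
Proof.
  intros [a [Ha HP]] [b [Hb HQ]]. destruct (proj2 Hdir a b Ha Hb) as [g [Hg [Hga Hgb]]].
  exists g; split; [exact Hg |]. intros x [Hx Hgx].
  split; [apply HP | apply HQ]; split; [exact Hx | | exact Hx |]; eapply aL_trans; eauto.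
Qed.

Lemma eventually_contra (P : @mset L) : eventually H P -> ~ eventually H (fun x => ~ P x).
Proof.
  intros HP HnP. destruct (eventually_witness _ _ (eventually_and _ _ HP HnP)) as [x [Px nPx]].
  exact (nPx Px).
Qed.

Lemma eventually_union_iff (A B : @mset L) : decided H A ->
  eventually H (msetU A B) <-> eventually H A \/ eventually H B.
Proof.
  intros [HA | HnA]; split.
  - intros _; left; exact HA.
  - intros _; apply (eventually_mono H A); [intros x Hx; left; exact Hx | exact HA].
  - intros HAB; right.
    apply (eventually_mono H (msetI (msetU A B) (fun x => ~ A x))).
    + intros x [[Ax | Bx] nAx]; [contradiction | exact Bx].
    + apply eventually_and; assumption.
  - intros [HA | HB]; [exfalso; exact (eventually_contra _ HA HnA) |].
    apply (eventually_mono H B); [intros x Hx; right; exact Hx | exact HB].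
Qed.

Lemma eventually_diff_iff (A B : @mset L) : decided H B ->
  eventually H (msetD A B) <-> eventually H A /\ ~ eventually H B.
Proof.
  intros HB; split.
  - intros HAB; split; [exact (eventually_mono H _ _ (fun x Hx => proj1 Hx) HAB) |].
    intros HBe; apply (eventually_contra B HBe).
    exact (eventually_mono H _ _ (fun x Hx => proj2 Hx) HAB).
  - intros [HA HnB]. destruct HB as [HB | HnotB]; [contradiction |].
    exact (eventually_and _ _ HA HnotB).
Qed.

End DirectedFilterBase.

(** * Filters and ultrafilters of the ring 𝒜_v *)

Lemma ring_gen_inter (v : Obj L) (A B : @mset L) :
  ring_gen v A -> ring_gen v B -> ring_gen v (msetI A B).
Proof.
  intros HA HB. replace (msetI A B) with (msetD A (msetD A B)).
  - apply rg_diff, rg_diff; assumption.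
  - apply mset_ext; intros x; unfold msetD, msetI; tauto.
Qed.

Section RingFilter.
Variables (v : Obj L) (U : @mset L -> Prop).

Lemma filter_ring (A : @mset L) : ring_filter v U -> U A -> ring_gen v A.
Proof. intros [_ [Hring _]]; apply Hring. Qed.

Lemma filter_up (A B : @mset L) : ring_filter v U -> U A -> ring_gen v B -> msubset A B -> U B.
Proof. intros [_ [_ [_ [_ Hup]]]]; apply Hup. Qed.

Lemma filter_meet_nonempty (A B : @mset L) : ring_filter v U -> U A -> U B -> exists x, A x /\ B x.
Proof.
  intros [_ [_ [Hn0 [Hmeet _]]]] HA HB. apply NNPP; intros Hempty. apply Hn0.
  replace (@mset0 L) with (msetI A B); [exact (Hmeet _ _ HA HB) |].
  apply mset_ext; intros x; split; [intros HABx; apply Hempty; exists x; exact HABx | intros []].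
Qed.

Hypothesis HU : ring_ultrafilter v U.

(* If X \ Y ∉ U, the filter generated by U and Y is proper; by maximality it is U. *)
Lemma ultrafilter_split (X Y : @mset L) :
  U X -> ring_gen v Y -> U (msetI X Y) \/ U (msetD X Y).
Proof.
  destruct HU as [[Hne [Hring [Hn0 [Hmeet Hup]]]] Hmax]. intros HX HY.
  destruct (classic (U (msetD X Y))) as [HD | HD]; [right; exact HD | left].
  set (W := fun Z => ring_gen v Z /\ exists V, U V /\ msubset (msetI V Y) Z).
  assert (HW : ring_filter v W).
  { split; [| split; [| split; [| split]]].
    - exists (msetI X Y); split; [apply ring_gen_inter; auto |].
      exists X; split; [exact HX | intros x; auto].
    - intros Z [HZ _]; exact HZ.
    - intros [_ [V [HV Hsub]]].
      apply HD, (Hup (msetI V X)); [apply Hmeet; assumption | apply rg_diff; auto |].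
      intros x [Vx Xx]; split; [exact Xx | intros Yx; exact (Hsub x (conj Vx Yx))].
    - intros A B [HA [V1 [H1 S1]]] [HB [V2 [H2 S2]]]. split; [apply ring_gen_inter; assumption |].
      exists (msetI V1 V2); split; [apply Hmeet; assumption |].
      intros x [[V1x V2x] Yx]; split; [apply S1 | apply S2]; split; assumption.
    - intros A B [_ [V [HV Hsub]]] HB HAB.
      split; [exact HB | exists V; split; [exact HV | intros x Hx; auto]]. }
  apply (Hmax W HW).
  - intros Z HZ; split; [apply Hring, HZ | exists Z; split; [exact HZ | intros x [Zx _]; exact Zx]].
  - split; [apply ring_gen_inter; auto | exists X; split; [exact HX | intros x Hx; exact Hx]].
Qed.

Lemma ultrafilter_union_iff (A B : @mset L) : ring_gen v A -> ring_gen v B ->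
  U (msetU A B) <-> U A \/ U B.
Proof.
  intros HA HB. pose proof (proj1 HU) as HF. split.
  - intros HAB. destruct (ultrafilter_split _ _ HAB HA) as [HAB' | HAB'].
    + left; apply (filter_up (msetI (msetU A B) A)); [exact HF | exact HAB' | exact HA |].
      intros x [_ Ax]; exact Ax.
    + right; apply (filter_up (msetD (msetU A B) A)); [exact HF | exact HAB' | exact HB |].
      intros x [[Ax | Bx] nAx]; [contradiction | exact Bx].
  - intros [HUA | HUB]; [apply (filter_up A) | apply (filter_up B)];
      try assumption; try (apply rg_union; assumption); intros x Hx; [left | right]; exact Hx.
Qed.

Lemma ultrafilter_diff_iff (A B : @mset L) : ring_gen v A -> ring_gen v B ->
  U (msetD A B) <-> U A /\ ~ U B.
Proof.
  intros HA HB. pose proof (proj1 HU) as HF. split.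
  - intros HAB. split; [apply (filter_up (msetD A B)); auto; intros x [Ax _]; exact Ax |].
    intros HUB. destruct (filter_meet_nonempty _ _ HF HAB HUB) as [x [[_ nBx] Bx]].
    exact (nBx Bx).
  - intros [HUA HnB]. destruct (ultrafilter_split _ _ HUA HB) as [HAB | HAB]; [| exact HAB].
    exfalso; apply HnB, (filter_up (msetI A B)); auto; intros x [_ Bx]; exact Bx.
Qed.

End RingFilter.

Section UltrafilterOfC.
Variable FA : @finitely_aligned L.
Variables (v : Obj L) (C : @mset L -> Prop).
Hypothesis HC : vLstar v C.

Lemma eventually_Hof_D0 (E : @mset L) : D0 v E -> eventually (Hof v C) E <-> C E.
Proof.
  intros HE; split.
  - intros [b [Hb Hsub]].
    exact (Hof_meet_D0 v C E b HC HE Hb (Hsub b (conj Hb (aL_refl b)))).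
  - intros HCE. destruct (vLstar_principal FA v C E HC HCE) as [a [Ha Hsub]].
    exists a; split; [exact Ha | intros x [_ Hx]; exact (Hsub x Hx)].
Qed.

Lemma ring_gen_decided (A : @mset L) : ring_gen v A -> decided (Hof v C) A.
Proof.
  pose proof (Hof_directed FA v C HC) as Hdir.
  induction 1 as [E HE | | A B _ IHA _ IHB | A B _ IHA _ IHB].
  - destruct (classic (C E)) as [HCE | HnCE]; [left; apply eventually_Hof_D0; assumption | right].
    apply eventually_of_forall; [exact Hdir |]. intros x Hx Ex.
    exact (HnCE (Hof_meet_D0 v C E x HC HE Hx Ex)).
  - right; apply eventually_of_forall; [exact Hdir | intros x _ []].
  - destruct IHA as [HA | HnA].
    { left; exact (eventually_mono _ _ _ (fun x Ax => or_introl Ax) HA). }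
    destruct IHB as [HB | HnB].
    { left; exact (eventually_mono _ _ _ (fun x Bx => or_intror Bx) HB). }
    right; apply (eventually_mono _ (msetI (fun x => ~ A x) (fun x => ~ B x))).
    + intros x [nAx nBx] [Ax | Bx]; contradiction.
    + apply eventually_and; assumption.
  - destruct IHA as [HA | HnA].
    + destruct IHB as [HB | HnB]; [right | left; apply eventually_and; assumption].
      exact (eventually_mono _ _ _ (fun x Bx ABx => proj2 ABx Bx) HB).
    + right; exact (eventually_mono _ _ _ (fun x nAx ABx => nAx (proj1 ABx)) HnA).
Qed.

Lemma UofC_ring_filter : ring_filter v (UofC v C).
Proof.
  pose proof (Hof_directed FA v C HC) as Hdir. destruct (proj1 Hdir) as [a0 Ha0].
  split; [| split; [| split; [| split]]].
  - exists (aL a0); split; [apply rg_base, D0_aL, Ha0 |].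
    exists a0; split; [exact Ha0 | intros x [_ Hx]; exact Hx].
  - intros A [HA _]; exact HA.
  - intros [_ Hev]. destruct (eventually_witness _ _ Hev) as [x []].
  - intros A B [HA HevA] [HB HevB].
    split; [apply ring_gen_inter; assumption | exact (eventually_and _ Hdir _ _ HevA HevB)].
  - intros A B [_ HevA] HB HAB. split; [exact HB | exact (eventually_mono _ _ _ HAB HevA)].
Qed.

(* A ring filter containing 𝒰_C and some A ∉ 𝒰_C also contains bΛ \ A for the b
   witnessing that A is eventually avoided. *)
Lemma UofC_ultrafilter : ring_ultrafilter v (UofC v C).
Proof.
  split; [exact UofC_ring_filter |]. intros U' HU' Hsub A HA.
  pose proof (filter_ring v U' A HU' HA) as Hring.
  destruct (ring_gen_decided A Hring) as [HevA | [b [[Hb HCb] Hout]]]; [split; assumption |].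
  exfalso.
  assert (HbA : U' (msetD (aL b) A)).
  { apply Hsub; split; [apply rg_diff; [apply rg_base, D0_aL, Hb | exact Hring] |].
    exists b; split; [exact (conj Hb HCb) |].
    intros x Hx; split; [exact (proj2 Hx) | exact (Hout x Hx)]. }
  destruct (filter_meet_nonempty v U' _ _ HU' HA HbA) as [x [Ax [_ nAx]]].
  exact (nAx Ax).
Qed.

Lemma UofC_D0 (E : @mset L) : D0 v E -> (UofC v C E <-> C E).
Proof.
  intros HE. rewrite <- (eventually_Hof_D0 E HE). split; [intros [_ Hev]; exact Hev |].
  intros Hev; split; [apply rg_base, HE | exact Hev].
Qed.

Lemma ultrafilter_eventually_iff (U : @mset L -> Prop) :
  ring_ultrafilter v U -> (forall E, D0 v E -> (U E <-> C E)) ->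
  forall A, ring_gen v A -> (U A <-> eventually (Hof v C) A).
Proof.
  intros HU HUC. pose proof (Hof_directed FA v C HC) as Hdir.
  induction 1 as [E HE | | A B HA IHA HB IHB | A B HA IHA HB IHB].
  - rewrite (HUC E HE), (eventually_Hof_D0 E HE); reflexivity.
  - split; intros Hempty; exfalso.
    + destruct HU as [[_ [_ [Hn0 _]]] _]; exact (Hn0 Hempty).
    + destruct (eventually_witness _ _ Hempty) as [x []].
  - rewrite (ultrafilter_union_iff v U HU A B HA HB), IHA, IHB.
    symmetry; apply eventually_union_iff; [exact Hdir | apply ring_gen_decided, HA].
  - rewrite (ultrafilter_diff_iff v U HU A B HA HB), IHA, IHB.
    symmetry; apply eventually_diff_iff; [exact Hdir | apply ring_gen_decided, HB].
Qed.

Lemma UofC_unique (U : @mset L -> Prop) :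
  ring_ultrafilter v U -> (forall E, D0 v E -> (U E <-> C E)) -> U = UofC v C.
Proof.
  intros HU HUC. apply mset_family_ext; intros A; split.
  - intros HA. pose proof (filter_ring v U A (proj1 HU) HA) as Hring.
    split; [exact Hring | apply (ultrafilter_eventually_iff U HU HUC A Hring), HA].
  - intros [Hring Hev]. apply (ultrafilter_eventually_iff U HU HUC A Hring), Hev.
Qed.

End UltrafilterOfC.

End Development.

Theorem mainTheorem5 (L : LCSC) (v : Obj L) :
  @finitely_aligned L ->
  (* (1) C ↦ H(C) is a bijection vΛ^* → {directed hereditary H ⊆ vΛ}, inverse Cof *)
  ((forall C, vLstar v C ->
      msubset (Hof v C) (vL v) /\ directed (Hof v C) /\ hereditary (Hof v C)) /\
   (forall C, vLstar v C -> Cof v (Hof v C) = C) /\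
   (forall H, msubset H (vL v) -> directed H -> hereditary H ->
      vLstar v (Cof v H) /\ Hof v (Cof v H) = H) /\
   (forall C1 C2, vLstar v C1 -> vLstar v C2 ->
      ((forall E, C1 E -> C2 E) <-> msubset (Hof v C1) (Hof v C2)))) /\
  (* (2) the ultrafilter U_C of 𝒜_v with U_C ∩ 𝒟^{(0)}_v = C is UofC v C *)
  (forall C, vLstar v C ->
     (ring_ultrafilter v (UofC v C) /\
      (forall E, D0 v E -> (UofC v C E <-> C E))) /\
     (forall U, ring_ultrafilter v U -> (forall E, D0 v E -> (U E <-> C E)) ->
        U = UofC v C)).
Proof.
  intros FA. split; [split; [| split; [| split]] |].
  - intros C HC. split; [intros a [Ha _]; exact Ha |].
    split; [apply Hof_directed | apply Hof_hereditary]; assumption.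
  - intros C HC; apply Cof_Hof; assumption.
  - intros H Hv Hdir Hher; split; [apply Cof_vLstar | apply Hof_Cof]; assumption.
  - intros C1 C2; apply vLstar_incl_iff, FA.
  - intros C HC. split; [split |].
    + apply UofC_ultrafilter; assumption.
    + apply UofC_D0; assumption.
    + apply UofC_unique; assumption.
Qed.
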